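(* Fix $r\in(0,|\xi|_c)$ and let $\mathcal{S}=\{s>0:\alpha(r;s)<0\}$ (which is nonempty). For $s\in\mathcal{S}$ put $\lambda(r;s)=\sqrt{-\alpha(r;s)}>0$. Then there exists a unique $s\in\mathcal{S}$ such that $s=\lambda(r;s)$.
   Context: Fix $b,g>0$, $\rho_+>\rho_->0$, $\mu_\pm>0$, $\sigma_\pm\ge0$ (either both zero or both positive); $[\![\rho]\!]=\rho_+-\rho_-$. Let $\rho(x_3),\mu(x_3)$ equal $\rho_+,\mu_+$ on $(0,1)$ and $\rho_-,\mu_-$ on $(-b,0)$. $X=\{\psi\in H^2((-b,1)):\psi(-b)=\psi'(-b)=0\}$. For $r>0,s>0$: $E(\psi;r,s)=\frac12\int_{-b}^1s\mu(4r^2|\psi'|^2+|r^2\psi+\psi''|^2)dx_3+\frac12r^2(\sigma_+r^2+g\rho_+)|\psi(1)|^2+\frac12r^2(\sigma_-r^2-g[\![\rho]\!])|\psi(0)|^2$, $J(\psi;r)=\frac12\int_{-b}^1\rho(r^2|\psi|^2+|\psi'|^2)dx_3$, $\alpha(r;s)=\inf\{E(\psi;r,s):\psi\in X,\ J(\psi;r)=1\}$. $|\xi|_c=\sqrt{g[\![\rho]\!]/\sigma_-}$ if $\sigma_->0$, $|\xi|_c=\infty$ if $\sigma_-=0$. *)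

From HB Require Import structures.
From mathcomp Require Import all_boot all_order all_algebra.
From mathcomp Require Import all_classical all_reals all_analysis.
Set Implicit Arguments. Unset Strict Implicit. Unset Printing Implicit Defensive.
Import Order.TTheory GRing.Theory Num.Theory.
Import numFieldNormedType.Exports.
Local Open Scope classical_set_scope.
Local Open Scope ring_scope.

Section Defs.
Variable R : realType.

Local Notation leb := (@lebesgue_measure R).

Definition prim (f : R -> R) (a x : R) : R := Rintegral leb `[a, x] f.

Definition L2 (b : R) (f : R -> R) : Prop :=
  measurable_fun `[-b, 1] f /\
  leb.-integrable `[-b, 1] (fun x => ((f x) ^+ 2)%:E).

(* X = { psi in H^2((-b,1)) : psi(-b) = psi'(-b) = 0 } is parametrized by
   f = psi'' in L^2((-b,1)):  psi' = dpsi f,  psi = psi_of f. *)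
Definition dpsi (b : R) (f : R -> R) : R -> R := fun x => prim f (-b) x.
Definition psi_of (b : R) (f : R -> R) : R -> R := fun x => prim (dpsi b f) (-b) x.

(* piecewise constant coefficients: value p on (0,1), value m on (-b,0)
   (the value at the single point 0 is irrelevant for the integrals) *)
Definition pw (p m : R) (x : R) : R := if 0 < x then p else m.

Definition Efun (b g rp rm mp mm sp sm : R) (f : R -> R) (r s : R) : R :=
  let psi := psi_of b f in
  let psi' := dpsi b f in
  2^-1 * Rintegral leb `[-b, 1]
        (fun x => s * pw mp mm x *
                  (4 * r ^+ 2 * (psi' x) ^+ 2 + (r ^+ 2 * psi x + f x) ^+ 2))
  + 2^-1 * r ^+ 2 * (sp * r ^+ 2 + g * rp) * (psi 1) ^+ 2
  + 2^-1 * r ^+ 2 * (sm * r ^+ 2 - g * (rp - rm)) * (psi 0) ^+ 2.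

Definition Jfun (b rp rm : R) (f : R -> R) (r : R) : R :=
  let psi := psi_of b f in
  let psi' := dpsi b f in
  2^-1 * Rintegral leb `[-b, 1]
        (fun x => pw rp rm x * (r ^+ 2 * (psi x) ^+ 2 + (psi' x) ^+ 2)).

Definition alpha (b g rp rm mp mm sp sm : R) (r s : R) : R :=
  inf [set Efun b g rp rm mp mm sp sm f r s |
        f in [set f | L2 b f /\ Jfun b rp rm f r = 1]].

(* r in (0, |xi|_c), with |xi|_c = sqrt(g [[rho]] / sigma_-) if sigma_- > 0,
   and |xi|_c = +oo if sigma_- = 0 *)
Definition below_crit (g rp rm sm r : R) : Prop :=
  0 < r /\ (0 < sm -> r < Num.sqrt (g * (rp - rm) / sm)).

End Defs.

From HB Require Import structures.
From mathcomp Require Import all_boot all_order all_algebra.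
From mathcomp Require Import all_classical all_reals all_analysis.
From mathcomp Require Import measurable_realfun lebesgue_integral_differentiation.
From mathcomp Require Import ring lra.
Set Implicit Arguments. Unset Strict Implicit. Unset Printing Implicit Defensive.
Import Order.TTheory GRing.Theory Num.Theory.
Import numFieldNormedType.Exports.
Local Open Scope classical_set_scope.
Local Open Scope ring_scope.

(* E(psi; r, s) = s * Evisc psi + Ebdry psi with Evisc >= 0, so alpha(r; .) is, on
   s > 0, an infimum of nondecreasing affine functions of s.  The only negative part
   of Ebdry is -r^2 (g [[rho]] - sigma_- r^2) psi(0)^2 / 2, and by Cauchy-Schwarz
   psi(0)^2 <= b * int psi'^2 <= 2 b J(psi) / rho_-, so Ebdry >= -C on {J = 1}.
   Hence alpha is bounded below, nondecreasing and locally Lipschitz on (0, +oo).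
   Below the critical wave number the coefficient of psi(0)^2 is negative, and the
   normalised test function (x + b)^2 (1 - x) makes Ebdry < 0, so alpha < 0 for small s.
   Then h(s) = s^2 + alpha(s) is continuous, strictly increasing, negative near 0 and
   positive for large s; its unique zero is the unique s with s = sqrt(-alpha(s)). *)

Section inf_affine.
Variables (R : realType) (T : Type) (P : set T) (A B : T -> R) (C : R).
Hypothesis P_neq0 : P !=set0.
Hypothesis A_ge0 : forall f, P f -> 0 <= A f.
Hypothesis B_ge : forall f, P f -> - C <= B f.

Definition inf_affine (s : R) := inf [set s * A f + B f | f in P].

Let affine_neq0 s : [set s * A f + B f | f in P] !=set0.
Proof. by case: P_neq0 => f Pf; exists (s * A f + B f), f. Qed.

Let affine_ge s f : 0 <= s -> P f -> - C <= s * A f + B f.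
Proof. by move=> s0 Pf; have := A_ge0 Pf; have := B_ge Pf; nra. Qed.

Lemma inf_affine_ge s : 0 <= s -> - C <= inf_affine s.
Proof. by move=> s0; apply: lb_le_inf => // _ [f Pf <-]; exact: affine_ge. Qed.

Lemma inf_affine_le s f : 0 <= s -> P f -> inf_affine s <= s * A f + B f.
Proof.
move=> s0 Pf; apply: ge_inf; last by exists f.
by exists (- C) => _ [g Pg <-]; exact: affine_ge.
Qed.

Lemma inf_affine_nondecreasing s s' : 0 <= s -> s <= s' ->
  inf_affine s <= inf_affine s'.
Proof.
move=> s0 ss'; apply: lb_le_inf => // _ [f Pf <-].
apply: le_trans (inf_affine_le s0 Pf) _; have := A_ge0 Pf; nra.
Qed.

(* Near-minimizers at [s] have [A f <= (inf_affine s + C) / s], which bounds the slope. *)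
Lemma inf_affine_growth s s' : 0 < s -> s <= s' ->
  inf_affine s' <= inf_affine s + (s' - s) * (inf_affine s + C) / s.
Proof.
move=> s0 ss'; set a := inf_affine s.
apply/ler_addgt0Pr => e e0.
have [_ [f Pf <-] lt] :
    exists2 x, [set s * A f + B f | f in P] x & x < a + e * s / s'.
  by apply: inf_lt => //; rewrite ltrDl; apply: divr_gt0; [exact: mulr_gt0 | lra].
have Af := A_ge0 Pf; have Bf := B_ge Pf.
have le := inf_affine_le (ltW (lt_le_trans s0 ss')) Pf.
set q := (a + C) / s; have aq : a + C = q * s by rewrite /q divfK ?gt_eqF.
set t := e * s / s'; have te : t * s' = e * s by rewrite /t divfK ?gt_eqF //; lra.
rewrite -/t in lt; rewrite -mulrA -/q.
suff : s * (inf_affine s') <= s * (a + (s' - s) * q + e) by rewrite ler_pM2l.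
nra.
Qed.

Lemma inf_affine_dist_le a c x y : 0 < a -> x \in `[a, c] -> y \in `[a, c] ->
  `|inf_affine x - inf_affine y| <= (inf_affine c + C) / a * `|x - y|.
Proof.
move=> a0; wlog xy : x y / x <= y => [hw xI yI|].
  by case: (leP x y) => [/hw|/ltW/hw]; [exact|rewrite distrC (distrC x); exact].
rewrite !in_itv /= => /andP[ax xc] /andP[ay yc].
have x0 : 0 < x by lra.
have mono := inf_affine_nondecreasing (ltW x0) xy.
have grow := inf_affine_growth x0 xy.
have Cx : 0 <= inf_affine x + C by have := inf_affine_ge (ltW x0); lra.
rewrite distrC (distrC x) !ger0_norm ?subr_ge0 //.
rewrite addrC -lerBlDr in grow; apply: le_trans grow _.
rewrite -mulrA mulrC ler_wpM2r ?subr_ge0 //.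
apply: ler_pM => //; first by rewrite invr_ge0; lra.
- by rewrite lerD2r; apply: inf_affine_nondecreasing; lra.
- by rewrite lef_pV2 ?posrE.
Qed.

Lemma within_continuous_inf_affine a c : 0 < a -> a <= c ->
  {within `[a, c], continuous inf_affine}.
Proof.
move=> a0 ac; apply/subspace_continuousP => x xI.
set L := (inf_affine c + C) / a.
have L0 : 0 < L + 1.
  suff : 0 <= L by lra.
  by apply: divr_ge0; [have := @inf_affine_ge c; lra | lra].
apply/cvgrPdist_le => /= e e0.
have eL : 0 < (L + 1)^-1 * e by rewrite mulr_gt0 // invr_gt0.
rewrite near_withinE; near=> y => yI.
have xy : `|x - y| < (L + 1)^-1 * e by near: y; exact: cvgr_dist_lt.
rewrite /from_subspace /=.
apply: le_trans (inf_affine_dist_le a0 xI yI) _.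
apply: le_trans (_ : (L + 1) * `|x - y| <= e); first by rewrite ler_wpM2r // lerDl.
by rewrite -ler_pdivlMl // ltW.
Unshelve. all: by end_near. Qed.

Lemma inf_affine_unique_fixpoint (al : R -> R) :
  (forall s, 0 < s -> al s = inf_affine s) -> (exists2 f, P f & B f < 0) ->
  exists! s, (0 < s /\ al s < 0) /\ s = Num.sqrt (- al s).
Proof.
move=> alE [f0 Pf0 Bf0].
pose h s := s ^+ 2 + inf_affine s.
have h_incr s s' : 0 < s -> s < s' -> h s < h s'.
  move=> s0 ss'; have := inf_affine_nondecreasing (ltW s0) (ltW ss'); rewrite /h; nra.
have fixE s : 0 < s ->
    (al s < 0 /\ s = Num.sqrt (- al s)) <-> h s = 0.
  move=> s0; rewrite alE //; split => [[neg sE]|hs0].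
    by rewrite /h {1}sE sqr_sqrtr; lra.
  have als : inf_affine s = - s ^+ 2 by rewrite /h in hs0; lra.
  by rewrite als opprK sqrtr_sqr gtr0_norm //; split => //; nra.
have [s1 s1_gt0 hs1] : exists2 s1, 0 < s1 & h s1 < 0.
  have A0 := A_ge0 Pf0.
  pose s1 := - B f0 / (2 * (A f0 + 1 - B f0)).
  have s1E : s1 * (2 * (A f0 + 1 - B f0)) = - B f0 by rewrite /s1 divfK //; lra.
  have s1_gt0 : 0 < s1 by apply: divr_gt0; lra.
  exists s1 => //; have := inf_affine_le (ltW s1_gt0) Pf0; rewrite /h; nra.
have C0 : 0 < C by have := B_ge Pf0; lra.
pose s2 := s1 + C + 1.
have hs2 : 0 < h s2 by have := @inf_affine_ge s2; rewrite /h /s2; nra.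
have [s0 s0I hs0] : exists2 s0, s0 \in `[s1, s2] & h s0 = 0.
  apply: IVT; first by rewrite /s2; lra.
    apply: within_continuousD; last by apply: within_continuous_inf_affine; rewrite /s2; lra.
    by apply: continuous_subspaceT; exact: exprn_continuous.
  by rewrite ge_min le_max (ltW hs1) (ltW hs2) orbT.
have s0_gt0 : 0 < s0 by move: s0I; rewrite in_itv /= => /andP[+ _]; lra.
have [neg0 s0E] := (fixE s0 s0_gt0).2 hs0.
exists s0; split=> // s [[s_gt0 neg] sE]; have hs := (fixE s s_gt0).1 (conj neg sE).
by case: (ltgtP s s0) => // [/(h_incr _ _ s_gt0)|/(h_incr _ _ s0_gt0)]; lra.
Qed.
End inf_affine.

Section interval_integrals.
Context {R : realType}.
Local Notation leb := (@lebesgue_measure R).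
Implicit Types (a c : R) (f g : R -> R).

Lemma within_continuousM {A : set R} {f g} :
  {within A, continuous f} -> {within A, continuous g} ->
  {within A, continuous (fun x => f x * g x)}.
Proof. by move=> cf cg x; exact: continuousM (cf x) (cg x). Qed.

Lemma within_continuous_sqr {A : set R} {f} :
  {within A, continuous f} -> {within A, continuous (fun x => f x ^+ 2)}.
Proof. by move=> cf; under eq_fun do rewrite expr2; exact: within_continuousM. Qed.

Lemma within_continuous_cst {A : set R} {c} : {within A, continuous (fun=> c)}.
Proof. by apply: continuous_subspaceT => x; exact: cvg_cst. Qed.

Lemma continuous_itv_measurable a c f :
  {within `[a, c], continuous f} -> measurable_fun `[a, c] f.
Proof. by move=> cf; apply: subspace_continuous_measurable_fun. Qed.

Lemma continuous_itv_integrable a c f :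
  {within `[a, c], continuous f} -> leb.-integrable `[a, c] (EFin \o f).
Proof. by apply: continuous_compact_integrable; exact: segment_compact. Qed.

Lemma ge0_RintegralZl (D : set R) f k : measurable D -> 0 <= k ->
  measurable_fun D f -> (forall x, D x -> 0 <= f x) ->
  Rintegral leb D (fun x => k * f x) = k * Rintegral leb D f.
Proof.
move=> mD k0 mf f0; rewrite /Rintegral.
under eq_integral do rewrite EFinM.
rewrite ge0_integralZl_EFin //; last exact/measurable_EFinP.
have : (0 <= \int[leb]_(x in D) (f x)%:E)%E.
  by apply: integral_ge0 => x Dx; rewrite lee_fin f0.
case: (\int[leb]_(x in D) (f x)%:E)%E => [v _| _ |] //=.
by rewrite mulry; case: sgrP k0 => //=; rewrite ?mul0e ?mul1e //= mulr0.
Qed.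

Lemma le_Rintegral_subset (A B : set R) f : measurable A -> measurable B ->
  A `<=` B -> leb.-integrable B (EFin \o f) -> (forall x, B x -> 0 <= f x) ->
  Rintegral leb A f <= Rintegral leb B f.
Proof.
move=> mA mB AB iB f0; have iA : leb.-integrable A (EFin \o f) by exact: integrableS iB.
apply: fine_le; [exact: integrable_fin_num | exact: integrable_fin_num |].
by apply: ge0_subset_integral => //; case/integrableP: iB.
Qed.

Lemma Rintegral_sqr_le a c g : a < c -> {within `[a, c], continuous g} ->
  (Rintegral leb `[a, c] g) ^+ 2 <= (c - a) * Rintegral leb `[a, c] (fun x => g x ^+ 2).
Proof.
move=> ac cg; have mI : measurable `[a, c] := measurable_itv _.
set I := Rintegral leb `[a, c] g; set Q := Rintegral leb `[a, c] (fun x => g x ^+ 2).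
have cmg m : {within `[a, c], continuous (fun x => 2 * m * g x)}.
  exact: within_continuousM within_continuous_cst cg.
have len : fine (leb `[a, c]) = c - a.
  by rewrite lebesgue_measure_itv /= lte_fin ac.
have quad m : 0 <= Q - (2 * m * I - m ^+ 2 * (c - a)).
  have -> : Q - (2 * m * I - m ^+ 2 * (c - a)) =
      Rintegral leb `[a, c] (fun x => (g x - m) ^+ 2).
    transitivity (Rintegral leb `[a, c]
        (fun x => g x ^+ 2 - (2 * m * g x - m ^+ 2))); last first.
      by apply: eq_Rintegral => x _; ring.
    rewrite RintegralB //; last 2 first.
    - exact/continuous_itv_integrable/within_continuous_sqr.
    - apply: continuous_itv_integrable.
      exact: within_continuousB (cmg m) within_continuous_cst.
    rewrite RintegralB //; last 2 first.
    - exact: continuous_itv_integrable.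
    - exact/continuous_itv_integrable/within_continuous_cst.
    by rewrite RintegralZl //; [rewrite Rintegral_cst // len | exact: continuous_itv_integrable].
  by apply: Rintegral_ge0 => x _; exact: sqr_ge0.
pose t := I / (c - a); have tE : I = t * (c - a) by rewrite /t divfK // subr_eq0 gt_eqF.
have := quad t; rewrite tE; nra.
Qed.

Lemma Rintegral_deriv_poly (Q : {poly R}) a x : a <= x ->
  Rintegral leb `[a, x] (horner (deriv Q)) = Q.[x] - Q.[a].
Proof.
rewrite le_eqVlt => /predU1P[<-|ax]; first by rewrite set_itv1 Rintegral_set1 subrr.
rewrite /Rintegral (@continuous_FTC2 R (horner (deriv Q)) (horner Q)) //.
- by apply: continuous_subspaceT; exact: continuous_horner.
- split.
  + by move=> t _; exact: derivable_horner.
  + by apply: cvg_at_right_filter; exact: continuous_horner.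
  + by apply: cvg_at_left_filter; exact: continuous_horner.
- by move=> t _; rewrite derivE.
Qed.

Lemma pw_ge p m c x : c <= p -> c <= m -> c <= pw p m x.
Proof. by rewrite /pw; case: ifP. Qed.

Lemma pw_measurable (A : set R) p m : measurable A -> measurable_fun A (pw p m).
Proof.
move=> mA; apply: (measurable_funS measurableT) => //.
apply: measurable_fun_ifT; [|exact: measurable_cst|exact: measurable_cst].
by apply: measurable_fun_ltr; [exact: measurable_cst | exact: measurable_id].
Qed.

Lemma pw_integrable (A : set R) p m f : measurable A ->
  leb.-integrable A (EFin \o f) ->
  leb.-integrable A (EFin \o (fun x => pw p m x * f x)).
Proof.
move=> mA fi; have mf : measurable_fun A f by apply/measurable_EFinP; case/integrableP: fi.
apply: (@le_integrable _ _ _ leb A mA _ (fun x => (`|p| + `|m|)%:E * (f x)%:E)%E).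
- by apply/measurable_EFinP; apply: measurable_funM => //; exact: pw_measurable.
- move=> x _; rewrite /= lee_fin !normrM ler_wpM2r //.
  rewrite [X in _ <= X]ger0_norm ?addr_ge0 // /pw.
  by case: ifP => _; rewrite ?lerDl ?lerDr.
- exact: integrableZl fi.
Qed.

End interval_integrals.

Section energy.
Variables (R : realType) (b : R).
Hypothesis b_gt0 : 0 < b.
Local Notation leb := (@lebesgue_measure R).
Local Notation D := `[-b, 1]%classic.
Implicit Types (f : R -> R) (r s : R).

Let mD : measurable D. Proof. exact: measurable_itv. Qed.
Let b_le0 : -b <= 0. Proof. by rewrite oppr_le0 ltW. Qed.
Let b_le1 : -b <= 1. Proof. by have := b_gt0; lra. Qed.

Lemma L2_integrable f : L2 b f -> leb.-integrable D (EFin \o f).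
Proof.
move=> [mf i2].
apply: (@le_integrable _ _ _ leb D mD _ (EFin \o (fun x => 1 + f x ^+ 2))).
- exact/measurable_EFinP.
- move=> x _ /=; rewrite lee_fin [X in _ <= X]ger0_norm; last first.
    by apply: addr_ge0 => //; exact: sqr_ge0.
  have := real_normK (num_real (f x)); have := normr_ge0 (f x); nra.
- have -> : EFin \o (fun x => 1 + f x ^+ 2) =
    (EFin \o cst (1 : R)) \+ (fun x => (f x ^+ 2)%:E).
    by apply/funext => x; rewrite /= EFinD.
  apply: integrableD => //.
  exact/continuous_itv_integrable/within_continuous_cst.
Qed.

Lemma dpsi_continuous f : leb.-integrable D (EFin \o f) ->
  {within D, continuous (dpsi b f)}.
Proof. exact: parameterized_integral_continuous. Qed.

Lemma psi_continuous f : leb.-integrable D (EFin \o f) ->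
  {within D, continuous (psi_of b f)}.
Proof.
move=> fi; apply: parameterized_integral_continuous => //.
exact/continuous_itv_integrable/dpsi_continuous.
Qed.

Lemma psi0_sqr_le f : leb.-integrable D (EFin \o f) ->
  psi_of b f 0 ^+ 2 <= b * Rintegral leb D (fun x => dpsi b f x ^+ 2).
Proof.
move=> fi; have cg := dpsi_continuous fi.
have sub : `[-b, 0] `<=` D.
  by move=> x /=; rewrite !in_itv /= => /andP[-> x0] /=; lra.
apply: le_trans (_ : b * Rintegral leb `[-b, 0] (fun x => dpsi b f x ^+ 2) <= _).
  have bE : b = 0 - - b by rewrite sub0r opprK.
  rewrite [X in X * _]bE.
  apply: Rintegral_sqr_le; first by rewrite oppr_lt0.
  exact: continuous_subspaceW sub cg.
apply: ler_wpM2l; first exact: ltW.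
apply: le_Rintegral_subset => //.
- exact/continuous_itv_integrable/within_continuous_sqr.
- by move=> x _; exact: sqr_ge0.
Qed.

Lemma dpsi_sqr_le_J rp rm r f : 0 < rm -> rm < rp ->
  leb.-integrable D (EFin \o f) ->
  Rintegral leb D (fun x => dpsi b f x ^+ 2) <= 2 / rm * Jfun b rp rm f r.
Proof.
move=> rm0 rmp fi; have cg := dpsi_continuous fi; have cp := psi_continuous fi.
have le : Rintegral leb D (fun x => rm * dpsi b f x ^+ 2) <=
    Rintegral leb D (fun x => pw rp rm x *
      (r ^+ 2 * psi_of b f x ^+ 2 + dpsi b f x ^+ 2)).
  apply: le_Rintegral => //.
  - apply: continuous_itv_integrable.
    exact: within_continuousM within_continuous_cst (within_continuous_sqr cg).
  - apply/pw_integrable/continuous_itv_integrable => //.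
    apply: within_continuousD (within_continuous_sqr cg).
    exact: within_continuousM within_continuous_cst (within_continuous_sqr cp).
  - move=> x _; have := @pw_ge _ rp rm rm x (ltW rmp) (lexx _).
    have := mulr_ge0 (sqr_ge0 r) (sqr_ge0 (psi_of b f x)).
    have := sqr_ge0 (dpsi b f x); nra.
rewrite RintegralZl // in le; last first.
  exact/continuous_itv_integrable/within_continuous_sqr.
rewrite /Jfun; set J := Rintegral leb D (fun x => pw rp rm x * _) in le *.
have -> : 2 / rm * (2^-1 * J) = J / rm by field; rewrite gt_eqF.
by rewrite ler_pdivlMr // mulrC.
Qed.

Lemma psi0_sqr_le_J rp rm r f : 0 < rm -> rm < rp ->
  leb.-integrable D (EFin \o f) ->
  psi_of b f 0 ^+ 2 <= b * (2 / rm * Jfun b rp rm f r).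
Proof.
move=> rm0 rmp fi; apply: le_trans (psi0_sqr_le fi) _.
by apply: ler_wpM2l; [exact: ltW | exact: dpsi_sqr_le_J].
Qed.

Definition Evisc mp mm r f := 2^-1 * Rintegral leb D (fun x => pw mp mm x *
  (4 * r ^+ 2 * dpsi b f x ^+ 2 + (r ^+ 2 * psi_of b f x + f x) ^+ 2)).

Definition Ebdry g rp rm sp sm r f :=
  2^-1 * r ^+ 2 * (sp * r ^+ 2 + g * rp) * psi_of b f 1 ^+ 2
  + 2^-1 * r ^+ 2 * (sm * r ^+ 2 - g * (rp - rm)) * psi_of b f 0 ^+ 2.

Lemma Evisc_ge0 mp mm r f : 0 <= mp -> 0 <= mm -> 0 <= Evisc mp mm r f.
Proof.
move=> mp0 mm0; apply: mulr_ge0 => //; apply: Rintegral_ge0 => x _.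
apply: mulr_ge0; first exact: pw_ge.
by apply: addr_ge0; [apply: mulr_ge0; [apply: mulr_ge0 => //|]|]; exact: sqr_ge0.
Qed.

Lemma Efun_affine g rp rm mp mm sp sm r s f : 0 <= mp -> 0 <= mm -> 0 <= s ->
  L2 b f -> Efun b g rp rm mp mm sp sm f r s =
    s * Evisc mp mm r f + Ebdry g rp rm sp sm r f.
Proof.
move=> mp0 mm0 s0 Lf; have fi := L2_integrable Lf.
have cg := dpsi_continuous fi; have cp := psi_continuous fi.
rewrite /Efun /Evisc /Ebdry -!addrA; congr (_ + _).
under eq_Rintegral do rewrite -mulrA.
rewrite ge0_RintegralZl //; first by rewrite mulrCA.
- apply: measurable_funM; first exact: pw_measurable.
  apply: measurable_funD.
    apply: continuous_itv_measurable.
    exact: within_continuousM within_continuous_cst (within_continuous_sqr cg).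
  apply: measurable_funX; apply: measurable_funD; last exact: Lf.1.
  apply: continuous_itv_measurable.
  exact: within_continuousM within_continuous_cst cp.
- move=> x _; apply: mulr_ge0; first exact: pw_ge.
  by apply: addr_ge0; [apply: mulr_ge0; [apply: mulr_ge0 => //|]|]; exact: sqr_ge0.
Qed.

Lemma Ebdry_ge g rp rm sp sm r f : 0 < g -> 0 < rm -> rm < rp ->
  0 <= sp -> 0 <= sm -> leb.-integrable D (EFin \o f) ->
  - (r ^+ 2 * g * (rp - rm) * b / rm) * Jfun b rp rm f r <= Ebdry g rp rm sp sm r f.
Proof.
move=> g0 rm0 rmp sp0 sm0 fi.
have psi0_le := psi0_sqr_le_J r rm0 rmp fi.
set J := Jfun b rp rm f r in psi0_le *; set u := b * (2 / rm * J) in psi0_le.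
have -> : - (r ^+ 2 * g * (rp - rm) * b / rm) * J = - (2^-1 * r ^+ 2 * (g * (rp - rm))) * u.
  by rewrite /u; field; rewrite gt_eqF.
have r2 := sqr_ge0 r; have K0 : 0 <= g * (rp - rm) by rewrite mulr_ge0 //; lra.
have T1 : 0 <= 2^-1 * r ^+ 2 * (sp * r ^+ 2 + g * rp) * psi_of b f 1 ^+ 2.
  apply/mulr_ge0/sqr_ge0; apply: mulr_ge0; first by rewrite mulr_ge0.
  by apply: addr_ge0; apply: mulr_ge0 => //; lra.
have T2 : 0 <= 2^-1 * r ^+ 2 * (sm * r ^+ 2) * psi_of b f 0 ^+ 2.
  by apply/mulr_ge0/sqr_ge0; apply: mulr_ge0; [rewrite mulr_ge0 | exact: mulr_ge0].
have T3 : - (2^-1 * r ^+ 2 * (g * (rp - rm))) * u <=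
    - (2^-1 * r ^+ 2 * (g * (rp - rm))) * psi_of b f 0 ^+ 2.
  by rewrite !mulNr lerN2; apply: ler_wpM2l => //; rewrite mulr_ge0 // mulr_ge0.
rewrite /Ebdry; lra.
Qed.

(* [psi = k * bump] satisfies psi(-b) = psi'(-b) = 0 as [X] requires, kills the
   stabilising psi(1) term, and has psi(0) = k b^2 <> 0. *)
Definition bump : {poly R} := ('X + b%:P) ^+ 2 * (1 - 'X).

Definition bump_fun k : R -> R := horner (deriv (deriv (k *: bump))).

Lemma bump_mb : bump.[-b] = 0.
Proof. by rewrite /bump !hornerE /=; ring. Qed.

Lemma deriv_bump_mb : (deriv bump).[-b] = 0.
Proof. by rewrite /bump !poly.derivE !hornerE /=; ring. Qed.

Lemma bump0 : bump.[0] = b ^+ 2.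
Proof. by rewrite /bump !hornerE /=; ring. Qed.

Lemma bump1 : bump.[1] = 0.
Proof. by rewrite /bump !hornerE /=; ring. Qed.

Lemma dpsi_bump k x : -b <= x -> dpsi b (bump_fun k) x = k * (deriv bump).[x].
Proof.
move=> bx; rewrite /dpsi /prim Rintegral_deriv_poly //.
by rewrite poly.derivZ !hornerZ deriv_bump_mb mulr0 subr0.
Qed.

Lemma psi_bump k x : -b <= x -> psi_of b (bump_fun k) x = k * bump.[x].
Proof.
move=> bx; rewrite /psi_of {1}/prim.
transitivity (Rintegral leb `[-b, x] (fun t => (deriv (k *: bump)).[t])).
  apply: eq_Rintegral => t /[!inE] tI.
  by rewrite -/(dpsi b _ t) dpsi_bump ?(itvP tI) // poly.derivZ hornerZ.
by rewrite Rintegral_deriv_poly // !hornerZ bump_mb mulr0 subr0.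
Qed.

Lemma bump_L2 k : L2 b (bump_fun k).
Proof.
have cb : {within D, continuous bump_fun k}.
  by apply: continuous_subspaceT; exact: continuous_horner.
split; first exact: continuous_itv_measurable.
exact/continuous_itv_integrable/within_continuous_sqr.
Qed.

Lemma J_bump rp rm r k :
  Jfun b rp rm (bump_fun k) r = k ^+ 2 * Jfun b rp rm (bump_fun 1) r.
Proof.
pose H x := pw rp rm x * (r ^+ 2 * bump.[x] ^+ 2 + (deriv bump).[x] ^+ 2).
have JE k' : Jfun b rp rm (bump_fun k') r = 2^-1 * Rintegral leb D (fun x => k' ^+ 2 * H x).
  congr (_ * _); apply: eq_Rintegral => x /[!inE] xI.
  by rewrite psi_bump ?dpsi_bump ?(itvP xI) // /H; ring.
have cH : leb.-integrable D (EFin \o H).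
  apply/pw_integrable/continuous_itv_integrable => //.
  have cp q : {within D, continuous horner q}.
    by apply: continuous_subspaceT; exact: continuous_horner.
  apply: within_continuousD (within_continuous_sqr (cp _)).
  exact: within_continuousM within_continuous_cst (within_continuous_sqr (cp _)).
by rewrite !JE !RintegralZl // expr1n mul1r mulrCA.
Qed.

Lemma J_bump_gt0 rp rm r : 0 < rm -> rm < rp -> 0 < Jfun b rp rm (bump_fun 1) r.
Proof.
move=> rm0 rmp; have := psi0_sqr_le_J r rm0 rmp (L2_integrable (bump_L2 1)).
rewrite psi_bump // bump0 mul1r.
move=> /(lt_le_trans (exprn_gt0 2 (exprn_gt0 2 b_gt0))).
by rewrite pmulr_rgt0 // pmulr_rgt0 // divr_gt0.
Qed.

Lemma Ebdry_bump g rp rm sp sm r k : Ebdry g rp rm sp sm r (bump_fun k) =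
  2^-1 * r ^+ 2 * (sm * r ^+ 2 - g * (rp - rm)) * (k * b ^+ 2) ^+ 2.
Proof.
rewrite /Ebdry !psi_bump // bump0 bump1.
by rewrite mulr0 expr0n /= mulr0 add0r.
Qed.

Lemma exists_Ebdry_lt0 g rp rm sp sm r : 0 < rm -> rm < rp -> 0 < r ->
  sm * r ^+ 2 - g * (rp - rm) < 0 ->
  exists2 f, L2 b f /\ Jfun b rp rm f r = 1 & Ebdry g rp rm sp sm r f < 0.
Proof.
move=> rm0 rmp r0 coef_lt0; have J1 := J_bump_gt0 r rm0 rmp.
pose k := (Num.sqrt (Jfun b rp rm (bump_fun 1) r))^-1.
have k0 : 0 < k by rewrite invr_gt0 sqrtr_gt0.
exists (bump_fun k).
  split; first exact: bump_L2.
  by rewrite J_bump exprVn sqr_sqrtr ?ltW // mulVf ?gt_eqF.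
have P0 : 0 < 2^-1 * r ^+ 2 * (k * b ^+ 2) ^+ 2.
  by apply: mulr_gt0; [apply: mulr_gt0 | apply/exprn_gt0/mulr_gt0]; rewrite ?exprn_gt0.
by rewrite Ebdry_bump mulrAC pmulr_rlt0.
Qed.

End energy.

Lemma below_crit_coef_lt0 (R : realType) (g rp rm sm r : R) :
  0 < g -> rm < rp -> 0 <= sm -> below_crit g rp rm sm r ->
  sm * r ^+ 2 - g * (rp - rm) < 0.
Proof.
move=> g0 rmp sm0 [r0 r_lt]; have K0 : 0 < g * (rp - rm) by rewrite mulr_gt0 // subr_gt0.
have [->|sm_gt0] := eqVneq sm 0; first by rewrite mul0r sub0r oppr_lt0.
have {}sm_gt0 : 0 < sm by rewrite lt_def sm_gt0.
have crit0 : 0 <= g * (rp - rm) / sm by rewrite divr_ge0 ?ltW.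
have : r ^+ 2 < g * (rp - rm) / sm.
  by rewrite -(sqr_sqrtr crit0) (ltrXn2r 2 (ltW r0) (r_lt sm_gt0)).
by rewrite ltr_pdivlMr // mulrC subr_lt0.
Qed.

Theorem lemma2p2 (R : realType) (b g rp rm mp mm sp sm r : R)
  (hb : 0 < b) (hg : 0 < g) (hrho : 0 < rm) (hrho' : rm < rp)
  (hmp : 0 < mp) (hmm : 0 < mm)
  (hsig : (sp = 0 /\ sm = 0) \/ (0 < sp /\ 0 < sm))
  (hr : below_crit g rp rm sm r) :
  exists! s : R,
    (0 < s /\ alpha b g rp rm mp mm sp sm r s < 0) /\
    s = Num.sqrt (- alpha b g rp rm mp mm sp sm r s).
Proof.
have [sp0 sm0] : 0 <= sp /\ 0 <= sm by case: hsig => -[sp0 sm0]; split; lra.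
have coef_lt0 := below_crit_coef_lt0 hg hrho' sm0 hr.
have [f0 Pf0 Bf0] := exists_Ebdry_lt0 hb sp hrho hrho' hr.1 coef_lt0.
pose P := [set f | L2 b f /\ Jfun b rp rm f r = 1].
apply: (@inf_affine_unique_fixpoint R _ P (Evisc b mp mm r) (Ebdry b g rp rm sp sm r)
  (r ^+ 2 * g * (rp - rm) * b / rm)).
- by exists f0.
- by move=> f _; apply: Evisc_ge0; exact: ltW.
- move=> f [Lf Jf]; have := Ebdry_ge hb r hg hrho hrho' sp0 sm0 (L2_integrable Lf).
  by rewrite Jf mulr1.
- move=> s s0; congr inf; apply: eq_imagel => f [Lf _].
  by rewrite Efun_affine // ltW.
- by exists f0.
Qed.
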